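(* Let $F$ be the unique series in $\mathbb{Q}[x,\bar x,y,\bar y][[t]]$ satisfying $(1-St)F=\bar x\bar y-\bar x t[x^0]F-\bar y t[y^0]F$, and let $F_1=[x^<][y^<]F$. Then $$F_1(x,y,t)=\bar x\bar y\,Q(\bar x,\bar y,t),$$ where $Q(x,y,t)=\sum_{n\ge0}\sum_{i,j\ge0}a_{i,j,n}x^iy^jt^n$ and $a_{i,j,n}$ is the number of walks in $\mathbb{N}^2$ starting at $(0,0)$, ending at $(i,j)$, with $n$ steps from $\{(1,0),(-1,0),(0,1),(0,-1)\}$. Moreover $$F_1(x,y,t)-F_1(\bar x,y,t)=[y^<]\,\frac{xy-\bar xy-x\bar y+\bar x\bar y}{1-St}.$$
   Context: Notation: $\bar x=x^{-1}$, $\bar y=y^{-1}$, $S=x+y+\bar x+\bar y$; series in $\mathbb{Q}[x,\bar x,y,\bar y][[t]]$, with $1/(1-St)$ expanded as a power series in $t$. For $G=\sum c_{i,j,n}x^iy^jt^n$: $[x^0]G=\sum_{j,n}c_{0,j,n}y^jt^n$, $[y^0]G=\sum_{i,n}c_{i,0,n}x^it^n$; $[x^<]G=\sum_{i<0}c_{i,j,n}x^iy^jt^n$ (terms with negative $x$-exponent), and analogously $[y^<]$ for $y$. *)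

From mathcomp Require Import all_boot all_algebra.
Set Implicit Arguments. Unset Strict Implicit. Unset Printing Implicit Defensive.
Import GRing.Theory Num.Theory.
Local Open Scope ring_scope.

(* A series sum_{i,j,n} c i j n x^i y^j t^n with i,j in Z, n in N, rational coefficients. *)
Definition ser := int -> int -> nat -> rat.

(* Membership in Q[x,xbar,y,ybar][[t]]: each t^n-coefficient is a Laurent polynomial. *)
Definition laurent_ser (F : ser) : Prop :=
  forall n : nat, exists B : nat, forall i j : int,
    ((B < `|i|)%N || (B < `|j|)%N) -> F i j n = 0.

Definition sadd (F G : ser) : ser := fun i j n => F i j n + G i j n.
Definition ssub (F G : ser) : ser := fun i j n => F i j n - G i j n.
Definition mulx (F : ser) : ser := fun i j n => F (i - 1) j n.
Definition mulxb (F : ser) : ser := fun i j n => F (i + 1) j n.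
Definition muly (F : ser) : ser := fun i j n => F i (j - 1) n.
Definition mulyb (F : ser) : ser := fun i j n => F i (j + 1) n.
Definition mult (F : ser) : ser :=
  fun i j n => match n with 0%N => 0 | n'.+1 => F i j n' end.
Definition mulS (F : ser) : ser := sadd (sadd (mulx F) (mulxb F)) (sadd (muly F) (mulyb F)).
Definition mono (a b : int) : ser :=
  fun i j n => if (i == a) && (j == b) && (n == 0)%N then 1 else 0.
Definition coef_x0 (F : ser) : ser := fun i j n => if i == 0 then F 0 j n else 0.
Definition coef_y0 (F : ser) : ser := fun i j n => if j == 0 then F i 0 n else 0.
Definition neg_x (F : ser) : ser := fun i j n => if i < 0 then F i j n else 0.
Definition neg_y (F : ser) : ser := fun i j n => if j < 0 then F i j n else 0.
Definition subst_xinv (F : ser) : ser := fun i j n => F (- i) j n.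
Definition subst_xyinv (F : ser) : ser := fun i j n => F (- i) (- j) n.
(* 1/(1 - S t) = sum_n S^n t^n *)
Definition inv_1_St : ser := fun i j n => iter n mulS (mono 0 0) i j 0%N.

Definition F_eqn (F : ser) : Prop :=
  ssub F (mult (mulS F)) =
  ssub (ssub (mono (-1) (-1)) (mulxb (mult (coef_x0 F)))) (mulyb (mult (coef_y0 F))).

Definition step (k : 'I_4) : int * int :=
  match val k with
  | 0%N => ((1 : int), (0 : int))
  | 1%N => ((-1 : int), (0 : int))
  | 2%N => ((0 : int), (1 : int))
  | _ => ((0 : int), (-1 : int))
  end.
Definition add_pt (p q : int * int) : int * int := (p.1 + q.1, p.2 + q.2).
Definition positions (w : seq 'I_4) : seq (int * int) :=
  scanl (fun p k => add_pt p (step k)) ((0 : int), (0 : int)) w.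
Definition in_quadrant (p : int * int) : bool := (0 <= p.1) && (0 <= p.2).
Definition endpoint (w : seq 'I_4) : int * int := last ((0 : int), (0 : int)) (positions w).
Definition nwalks (n : nat) (i j : int) : nat :=
  #|[set w : n.-tuple 'I_4 | all in_quadrant (positions w) & endpoint w == (i, j)]|.

Definition Qser : ser := fun i j n => if (0 <= i) && (0 <= j) then (nwalks n i j)%:R else 0.

Definition F1_of (F : ser) : ser := neg_x (neg_y F).

Definition mul_num (G : ser) : ser :=
  sadd (ssub (ssub (mulx (muly G)) (mulxb (muly G))) (mulx (mulyb G))) (mulxb (mulyb G)).

From mathcomp Require Import all_boot all_order all_algebra.
From mathcomp Require Import ring zify.
From Stdlib Require Import FunctionalExtensionality.
Set Implicit Arguments. Unset Strict Implicit. Unset Printing Implicit Defensive.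
Import Order.TTheory GRing.Theory Num.Theory.
Local Open Scope ring_scope.

(* A series F = sum_n F_n t^n is handled through its slices
   F_n : Z^2 -> Q; multiplication by S acts on a slice as the neighbour sum
   [nbsum], and every identity below is proved by showing that both sides
   have the same initial slice and obey the same slice recursion.
   1. Comparing t^n-coefficients, the functional equation reads
      F_0 = [(-1,-1)] and F_{n+1} = Fnext F_n, where Fnext is nbsum corrected
      by the boundary terms xbar [x^0] and ybar [y^0].  Hence the solution
      exists, is unique, and its slices have bounded support.
   2. Cutting a walk after its last step, the slices of Q obey
      Q_{n+1} = (restriction to N^2) (nbsum Q_n).
   3. On the negative quadrant the boundary terms of Fnext exactly cancel
      the neighbours lying outside the quadrant, so the slices of F_1 obey
      the recursion of Q transported by the reflection (i,j) -> (-i-1,-j-1);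
      hence F_1 = xbar ybar Q(xbar,ybar).
   4. Antisymmetrising F_1 in i (the reflected copies cancel on the axis
      i = 0), and multiplying the slices of 1/(1-St) by (x-xbar)(y-ybar)
      (which kills the axis j = 0 by the y <-> ybar symmetry), both yield the
      half-plane recursion (restriction to j < 0) (nbsum) from the same
      initial slice; hence the second identity. *)

Ltac decide_ifs :=
  repeat match goal with
  | |- context [if ?b then _ else _] =>
      first [ let E := fresh in assert (E : b = true) by lia; rewrite E; clear E
            | let E := fresh in assert (E : b = false) by lia; rewrite E; clear E ]
  end.

Definition layer := int -> int -> rat.

Definition slice (F : ser) (n : nat) : layer := fun i j => F i j n.

Lemma ser_ext (F G : ser) : (forall n, slice F n = slice G n) -> F = G.
Proof.
move=> eqFG; do 3 apply: functional_extensionality => ?.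
by rewrite -[LHS]/(slice F _ _ _) eqFG.
Qed.

Definition nbsum (f : layer) : layer :=
  fun i j => f (i - 1) j + f (i + 1) j + (f i (j - 1) + f i (j + 1)).

Definition negq (f : layer) : layer := fun i j => if (i < 0) && (j < 0) then f i j else 0.
Definition posq (f : layer) : layer := fun i j => if (0 <= i) && (0 <= j) then f i j else 0.
Definition negy (f : layer) : layer := fun i j => if j < 0 then f i j else 0.

Definition Finit : layer := fun i j => if (i == -1) && (j == -1) then 1 else 0.

Definition axis_x (f : layer) : layer := fun i j => if i == 0 then f 0 j else 0.
Definition axis_y (f : layer) : layer := fun i j => if j == 0 then f i 0 else 0.

Definition Fnext (f : layer) : layer := fun i j =>
  nbsum f i j - axis_x f (i + 1) j - axis_y f i (j + 1).

Definition F_rhs (G : ser) : ser :=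
  ssub (ssub (mono (-1) (-1)) (mulxb (mult (coef_x0 G)))) (mulyb (mult (coef_y0 G))).
Definition Fmap (G : ser) : ser := sadd (mult (mulS G)) (F_rhs G).

Lemma F_eqn_fixpoint (G : ser) : F_eqn G <-> G = Fmap G.
Proof.
split=> [eqG | eqG]; first rewrite /Fmap /F_rhs -eqG.
  by do 3 apply: functional_extensionality => ?; rewrite /sadd /ssub addrC subrK.
rewrite /F_eqn {1}eqG; do 3 apply: functional_extensionality => ?.
by rewrite /Fmap /sadd /ssub addrC addKr.
Qed.

Lemma Fmap_slice0 (G : ser) : slice (Fmap G) 0 = Finit.
Proof.
do 2 apply: functional_extensionality => ?.
by rewrite /slice /Fmap /F_rhs /sadd /ssub /mono /mulxb /mulyb /= !subr0 add0r andbT.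
Qed.

Lemma Fmap_sliceS (G : ser) n : slice (Fmap G) n.+1 = Fnext (slice G n).
Proof.
do 2 apply: functional_extensionality => ?.
by rewrite /slice /Fmap /F_rhs /sadd /ssub /mono /mulxb /mulyb /= andbF sub0r addrA.
Qed.

Lemma F_eqn_slices (G : ser) :
  F_eqn G <-> slice G 0 = Finit /\ forall n, slice G n.+1 = Fnext (slice G n).
Proof.
rewrite F_eqn_fixpoint; split=> [eqG | [G0 GS]].
  split=> [|n]; first by rewrite eqG Fmap_slice0.
  by rewrite {1}eqG Fmap_sliceS.
by apply: ser_ext; case=> [|n]; rewrite ?Fmap_slice0 ?Fmap_sliceS.
Qed.

Definition Fsol : ser := fun i j n => iter n Fnext Finit i j.

Lemma Fsol_sliceS n : slice Fsol n.+1 = Fnext (slice Fsol n).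
Proof. by []. Qed.

Lemma Fsol_eqn : F_eqn Fsol.
Proof. by apply/F_eqn_slices. Qed.

Lemma Fsol_unique (G : ser) : F_eqn G -> G = Fsol.
Proof.
case/F_eqn_slices=> G0 GS; apply: ser_ext; elim=> [|n IH]; first exact: G0.
by rewrite GS IH.
Qed.

Definition supported_in (B : nat) (f : layer) : Prop :=
  forall i j : int, ((B < `|i|)%N || (B < `|j|)%N) -> f i j = 0.

Lemma Fnext_support B f : supported_in B f -> supported_in B.+1 (Fnext f).
Proof.
move=> sf i j far.
have nb : nbsum f i j = 0 by rewrite /nbsum !sf ?addr0 //; lia.
have ax : axis_x f (i + 1) j = 0 by rewrite /axis_x; case: eqP => // ?; apply: sf; lia.
have ay : axis_y f i (j + 1) = 0 by rewrite /axis_y; case: eqP => // ?; apply: sf; lia.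
by rewrite /Fnext nb ax ay !subr0.
Qed.

Lemma Fsol_laurent : laurent_ser Fsol.
Proof.
have box n : supported_in n.+1 (slice Fsol n).
  elim: n => [|n IH]; last exact: Fnext_support.
  by move=> i j far; rewrite /slice /Fsol /Finit /=; decide_ifs.
by move=> n; exists n.+1; apply: box.
Qed.

Definition fstep (p : int * int) (k : 'I_4) : int * int := add_pt p (step k).

Lemma endpoint_foldl (w : seq 'I_4) : endpoint w = foldl fstep (0, 0) w.
Proof.
case/lastP: w => [|w k] //.
by rewrite /endpoint /positions scanl_rcons last_rcons.
Qed.

Lemma positions_rcons (w : seq 'I_4) k :
  positions (rcons w k) = rcons (positions w) (fstep (endpoint w) k).
Proof. by rewrite /positions scanl_rcons endpoint_foldl foldl_rcons. Qed.

Lemma endpoint_rcons (w : seq 'I_4) k : endpoint (rcons w k) = fstep (endpoint w) k.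
Proof. by rewrite {1}/endpoint positions_rcons last_rcons. Qed.

Definition quadrant_walk n (w : n.-tuple 'I_4) (p : int * int) : bool :=
  all in_quadrant (positions w) && (endpoint w == p).

Lemma nwalks_sum n i j :
  nwalks n i j = \sum_(w : n.-tuple 'I_4) (quadrant_walk w (i, j) : nat).
Proof.
rewrite /nwalks -sum1_card big_mkcond /=; apply: eq_bigr => w _.
by rewrite inE /quadrant_walk; case: (_ && _).
Qed.

Lemma nwalks0 i j : nwalks 0 i j = ((i == 0) && (j == 0) : nat).
Proof.
rewrite nwalks_sum (eq_bigr (fun _ => ((i == 0) && (j == 0) : nat))).
  by rewrite sum_nat_const card_tuple expn0 mul1n.
move=> w _; rewrite tuple0 /quadrant_walk /= /endpoint /=.
by rewrite xpair_eqE (eq_sym 0 i) (eq_sym 0 j).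
Qed.

Lemma quadrant_walk_snoc n (w : n.-tuple 'I_4) k (p : int * int) :
  quadrant_walk [tuple of rcons w k] p =
  in_quadrant p && quadrant_walk w (p.1 - (step k).1, p.2 - (step k).2).
Proof.
rewrite /quadrant_walk /= positions_rcons endpoint_rcons all_rcons /fstep /add_pt.
case: (endpoint w) p => a b [i j] /=; rewrite !xpair_eqE.
have shift (u v c : int) : (u + c == v) = (u == v - c) by apply: (can2_eq (addrK c) (subrK c)).
rewrite !shift; case: eqP => [->|_]; last by rewrite !andbF.
by case: eqP => [->|_]; rewrite ?andbF // !subrK !andbT andbC.
Qed.

(* cutting the last step of a walk *)
Lemma nwalksS n i j : nwalks n.+1 i j =
  ((in_quadrant (i, j) : nat) * \sum_(k < 4) nwalks n (i - (step k).1) (j - (step k).2))%N.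
Proof.
pose snoc (p : 'I_4 * n.-tuple 'I_4) : n.+1.-tuple 'I_4 := [tuple of rcons p.2 p.1].
have snoc_inj : injective snoc.
  by move=> [k1 w1] [k2 w2] /(congr1 val) /= /rcons_inj [/val_inj -> ->].
have snoc_bij : bijective snoc.
  by apply: (inj_card_bij snoc_inj); rewrite card_prod !card_tuple card_ord expnS.
rewrite nwalks_sum (reindex snoc) /=; last exact: onW_bij.
rewrite -(pair_big predT predT (fun k w => (quadrant_walk (snoc (k, w)) (i, j) : nat))).
rewrite big_distrr /=; apply: eq_bigr => k _.
rewrite nwalks_sum big_distrr /=; apply: eq_bigr => w _.
by rewrite quadrant_walk_snoc mulnb.
Qed.

(* walks of length 0 sit at the origin, longer ones end in the quadrant *)
Lemma nwalks_out n i j : ~~ in_quadrant (i, j) -> nwalks n i j = 0%N.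
Proof.
move=> out; case: n => [|n]; last by rewrite nwalksS (negbTE out).
rewrite nwalks0; case: eqP out => [->|]; case: eqP => [->|] //.
Qed.

Lemma Qser_nwalks n i j : Qser i j n = (nwalks n i j)%:R.
Proof. by rewrite /Qser; case: ifP => // out; rewrite nwalks_out // /in_quadrant out. Qed.

Lemma Qser_slice0 : slice Qser 0 = fun i j => if (i == 0) && (j == 0) then 1 else 0.
Proof.
do 2 apply: functional_extensionality => ?.
by rewrite /slice Qser_nwalks nwalks0; case: (_ && _).
Qed.

Lemma Qser_sliceS n : slice Qser n.+1 = posq (nbsum (slice Qser n)).
Proof.
apply: functional_extensionality => i; apply: functional_extensionality => j.
rewrite /slice /posq Qser_nwalks nwalksS /in_quadrant /=.
case: (_ && _) => /=; last by rewrite mul0n.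
rewrite mul1n !big_ord_recl big_ord0 addn0 /nbsum !natrD !Qser_nwalks /=.
by rewrite !subr0 !opprK addrA.
Qed.

(* the reflection x^i y^j -> xbar^(i+1) ybar^(j+1) *)
Definition mirror (f : layer) : layer := fun i j => f (- (i + 1)) (- (j + 1)).

Lemma mirror_posq f : mirror (posq f) = negq (mirror f).
Proof.
apply: functional_extensionality => i; apply: functional_extensionality => j.
rewrite /mirror /posq /negq.
by case: (boolP (i < 0)) => ?; case: (boolP (j < 0)) => ?; decide_ifs.
Qed.

(* the step set is invariant under the reflection *)
Lemma mirror_nbsum f : mirror (nbsum f) = nbsum (mirror f).
Proof.
apply: functional_extensionality => i; apply: functional_extensionality => j.
have down (a : int) : - (a - 1 + 1) = - (a + 1) + 1 by ring.
have up (a : int) : - (a + 1 + 1) = - (a + 1) - 1 by ring.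
by rewrite /mirror /nbsum !down !up; ring.
Qed.

(* On the negative quadrant the boundary terms of Fnext cancel exactly the
   contributions of the neighbours lying outside the quadrant. *)
Lemma Fnext_negq f : negq (Fnext f) = negq (nbsum (negq f)).
Proof.
apply: functional_extensionality => i; apply: functional_extensionality => j.
rewrite /negq /Fnext /nbsum /axis_x /axis_y.
case: (boolP (i < 0)) => ?; case: (boolP (j < 0)) => ?; decide_ifs => //.
case: (eqVneq i (-1)) => [->|?]; case: (eqVneq j (-1)) => [->|?]; decide_ifs;
  rewrite ?addNr; ring.
Qed.

Lemma F1_slice F n : slice (F1_of F) n = negq (slice F n).
Proof.
apply: functional_extensionality => i; apply: functional_extensionality => j.
by rewrite /slice /F1_of /neg_x /neg_y /negq; case: (i < 0); case: (j < 0).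
Qed.

Lemma F1_Fsol : F1_of Fsol = mulxb (mulyb (subst_xyinv Qser)).
Proof.
have mirrorQ n : slice (mulxb (mulyb (subst_xyinv Qser))) n = mirror (slice Qser n) by [].
apply: ser_ext; elim=> [|n IH]; rewrite F1_slice mirrorQ.
  rewrite Qser_slice0.
  apply: functional_extensionality => i; apply: functional_extensionality => j.
  rewrite /negq /mirror /slice /Fsol /Finit /=.
  by case: (eqVneq i (-1)) => ?; case: (eqVneq j (-1)) => ?; decide_ifs; rewrite ?if_same.
rewrite Fsol_sliceS Fnext_negq -F1_slice IH mirrorQ.
by rewrite Qser_sliceS mirror_posq mirror_nbsum.
Qed.

Definition antisym (f : layer) : layer := fun i j => f i j - f (- i) j.

(* multiplication by (x - xbar)(y - ybar) on a slice *)
Definition numer (f : layer) : layer := fun i j =>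
  f (i - 1) (j - 1) - f (i + 1) (j - 1) - f (i - 1) (j + 1) + f (i + 1) (j + 1).

Definition even_y (f : layer) : Prop := forall i j, f i (- j) = f i j.

(* the antisymmetrisation of a quadrant recursion is a half-plane recursion:
   the two reflected copies cancel on the axis i = 0 *)
Lemma antisym_negq_nbsum f :
  antisym (negq (nbsum (negq f))) = negy (nbsum (antisym (negq f))).
Proof.
apply: functional_extensionality => i; apply: functional_extensionality => j.
rewrite /antisym /negq /negy /nbsum.
case: (boolP (j < 0)) => ?; last by decide_ifs; rewrite subr0.
case: (ltgtP i 0) => [?|?|?]; first by decide_ifs; ring.
  have e1 : - (i - 1) = (- i : int) + 1 by ring.
  have e2 : - (i + 1) = (- i : int) - 1 by ring.
  by rewrite e1 e2; decide_ifs; ring.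
have e1 : - (i - 1) = i + 1 by lia.
have e2 : - (i + 1) = i - 1 by lia.
have e3 : - i = i by lia.
by rewrite e1 e2 e3; decide_ifs; ring.
Qed.

Lemma numer_nbsum f : numer (nbsum f) = nbsum (numer f).
Proof.
apply: functional_extensionality => i; apply: functional_extensionality => j.
by rewrite /numer /nbsum !addrK; ring.
Qed.

Lemma nbsum_even f : even_y f -> even_y (nbsum f).
Proof.
move=> ef i j; have e1 : - j - 1 = - (j + 1) by ring.
have e2 : - j + 1 = - (j - 1) by ring.
by rewrite /nbsum e1 e2 !ef; ring.
Qed.

Lemma numer_axis f i : even_y f -> numer f i 0 = 0.
Proof. by move=> ef; rewrite /numer sub0r add0r !ef; ring. Qed.

Lemma negy_nbsum g : (forall i, g i 0 = 0) -> negy (nbsum g) = negy (nbsum (negy g)).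
Proof.
move=> g_axis; apply: functional_extensionality => i; apply: functional_extensionality => j.
rewrite /negy /nbsum; case: (boolP (j < 0)) => ? //; decide_ifs.
by case: (eqVneq j (-1)) => [->|?]; decide_ifs; rewrite ?addNr ?g_axis.
Qed.

Lemma inv_1_St_sliceS n : slice inv_1_St n.+1 = nbsum (slice inv_1_St n).
Proof. by []. Qed.

Lemma inv_1_St_even n : even_y (slice inv_1_St n).
Proof.
elim: n => [|n IH]; last by rewrite inv_1_St_sliceS; apply: nbsum_even.
by move=> i j; rewrite /slice /inv_1_St /= /mono oppr_eq0.
Qed.

Lemma antisym_F1_slice0 : antisym (negq Finit) = negy (numer (slice inv_1_St 0)).
Proof.
apply: functional_extensionality => i; apply: functional_extensionality => j.
rewrite /antisym /negq /negy /numer /slice /inv_1_St /= /Finit /mono eqxx !andbT.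
case: (eqVneq i (-1)) => ?; case: (eqVneq i 1) => ?; case: (eqVneq j (-1)) => ?;
  case: (boolP (j < 0)) => ?; decide_ifs; rewrite ?if_same; ring.
Qed.

Lemma antisym_F1 :
  ssub (F1_of Fsol) (subst_xinv (F1_of Fsol)) = neg_y (mul_num inv_1_St).
Proof.
suff eq_slices n : antisym (negq (slice Fsol n)) = negy (numer (slice inv_1_St n)).
  apply: ser_ext => n; rewrite -[RHS]/(negy (numer (slice inv_1_St n))).
  by rewrite -eq_slices -F1_slice.
elim: n => [|n IH]; first exact: antisym_F1_slice0.
rewrite Fsol_sliceS Fnext_negq antisym_negq_nbsum IH inv_1_St_sliceS numer_nbsum.
by rewrite [in RHS]negy_nbsum // => i; apply/numer_axis/inv_1_St_even.
Qed.

Theorem mainTheorem2 :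
  (exists! F : ser, laurent_ser F /\ F_eqn F) /\
  (forall F : ser, laurent_ser F -> F_eqn F ->
     F1_of F = mulxb (mulyb (subst_xyinv Qser)) /\
     ssub (F1_of F) (subst_xinv (F1_of F)) = neg_y (mul_num inv_1_St)).
Proof.
split.
  exists Fsol; split=> [|G [_ eqG]]; first by split; [exact: Fsol_laurent | exact: Fsol_eqn].
  by rewrite (Fsol_unique eqG).
move=> F _ eqF; rewrite (Fsol_unique eqF).
by split; [exact: F1_Fsol | exact: antisym_F1].
Qed.
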